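(* Let $\mathcal{I}$ be the collection of isometry classes of finite metric spaces, and for each $\zeta\in\mathcal{I}$ fix a representative $(X_\zeta,d_{X_\zeta})$, let $G_\zeta$ be its isometry group, and let $\Xi_\zeta$ be the set of partitions of $X_\zeta$ fixed by the natural action of $G_\zeta$ on the set $\mathcal{P}(X_\zeta)$ of partitions of $X_\zeta$. Then every clustering functor $\mathfrak{C}$ on $\mathcal{M}^{iso}$ determines, for each $\zeta\in\mathcal{I}$, the partition $p_\zeta:=\mathfrak{C}(X_\zeta,d_{X_\zeta})\in\Xi_\zeta$; conversely, any choice of $p_\zeta\in\Xi_\zeta$ for every $\zeta\in\mathcal{I}$ arises in this way from a (unique) clustering functor on $\mathcal{M}^{iso}$. That is, $\mathfrak{C}\mapsto(\mathfrak{C}(X_\zeta,d_{X_\zeta}))_{\zeta\in\mathcal{I}}$ is a bijection between clustering functors on $\mathcal{M}^{iso}$ and choices $(p_\zeta)_{\zeta\in\mathcal I}$ with $p_\zeta\in\Xi_\zeta$.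
   Context: $\mathcal{M}^{iso}$ is the category whose objects are finite metric spaces and whose morphisms $f:(X,d_X)\to(Y,d_Y)$ are isometries, i.e. bijections with $d_Y(f(x),f(x'))=d_X(x,x')$ for all $x,x'$. For a set map $f:X\to Y$ and a partition $P_Y$ of $Y$, $f^*(P_Y)$ is the partition of $X$ whose blocks are the nonempty sets $f^{-1}(B)$, $B$ a block of $P_Y$. A clustering functor on $\mathcal{M}^{iso}$ is a rule $\mathfrak{C}$ assigning to every finite metric space $(X,d_X)$ a partition $\mathfrak{C}(X,d_X)=P_X$ of $X$ such that for every morphism $f:(X,d_X)\to(Y,d_Y)$ of $\mathcal{M}^{iso}$, $P_X$ refines $f^*(P_Y)$ (i.e. $f$ is a morphism $(X,P_X)\to(Y,P_Y)$ of the category of partitioned finite sets). *)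

From HB Require Import structures.
From mathcomp Require Import all_boot all_order all_algebra.
From mathcomp Require Import reals.
Set Implicit Arguments. Unset Strict Implicit. Unset Printing Implicit Defensive.
Import Order.TTheory GRing.Theory Num.Theory.
Local Open Scope ring_scope.

Record finMetric (R : realType) := FinMetric {
  carrier : finType;
  dist : carrier -> carrier -> R;
  dist_refl : forall x, dist x x = 0;
  dist_sep : forall x y, dist x y = 0 -> x = y;
  dist_sym : forall x y, dist x y = dist y x;
  dist_tri : forall x y z, dist x z <= dist x y + dist y z
}.
Coercion carrier : finMetric >-> finType.
Arguments dist {R} M x y : rename.

(* Morphisms of M^iso: distance-preserving bijections. *)
Definition isometry (R : realType) (M N : finMetric R) (f : M -> N) : Prop :=
  bijective f /\ forall x x', dist N (f x) (f x') = dist M x x'.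

Definition isometric (R : realType) (M N : finMetric R) : Prop :=
  exists f : M -> N, isometry f.

(* Partitions of a finite set X: mathcomp's [partition P [set: X]]
   (blocks nonempty, pairwise disjoint, covering X). *)
Definition is_partition (X : finType) (P : {set {set X}}) : bool :=
  partition P [set: X].

Definition pullback (X Y : finType) (f : X -> Y) (PY : {set {set Y}})
  : {set {set X}} :=
  [set f @^-1: B | B : {set Y} in PY & f @^-1: B != set0].

Definition refines (X : finType) (P Q : {set {set X}}) : Prop :=
  forall B, B \in P -> exists2 C, C \in Q & B \subset C.

Record clustering_functor (R : realType) := ClusteringFunctor {
  cf :> forall M : finMetric R, {set {set M}};
  cf_partition : forall M : finMetric R, is_partition (cf M);
  cf_functorial : forall (M N : finMetric R) (f : M -> N),
      isometry f -> refines (cf M) (pullback f (cf N))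
}.

Definition act_partition (X : finType) (g : X -> X) (P : {set {set X}})
  : {set {set X}} :=
  [set g @: B | B : {set X} in P].

Definition Xi (R : realType) (M : finMetric R) (P : {set {set M}}) : Prop :=
  is_partition P /\ forall g : M -> M, isometry g -> act_partition g P = P.

From Pilot Require Import Defs.
From HB Require Import structures.
From mathcomp Require Import all_boot all_order all_algebra.
From mathcomp Require Import reals.
From Stdlib Require Import IndefiniteDescription.
Set Implicit Arguments. Unset Strict Implicit. Unset Printing Implicit Defensive.

(* An isometry f : M -> N forces C N to be the image of C M under f: the
   functoriality of C for f and for its inverse makes each of the two
   partitions refine the transport of the other, and mutually refining
   partitions coincide.  Taking N = M shows that C M is fixed by the isometry
   group, and taking M to be a representative shows that C is determined by
   its values on representatives.  Conversely, given G-fixed partitions p z,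
   transport p z to every M along a chosen isometry rep z -> M; the result
   does not depend on the chosen isometry precisely because p z is G-fixed,
   and functoriality then holds with equality. *)

Definition pushforward (X Y : finType) (f : X -> Y) (P : {set {set X}})
  : {set {set Y}} :=
  [set f @: B | B : {set X} in P].

Lemma pushforward_comp (X Y Z : finType) (f : X -> Y) (g : Y -> Z)
    (P : {set {set X}}) :
  pushforward (g \o f) P = pushforward g (pushforward f P).
Proof.
rewrite /pushforward -imset_comp.
by apply: eq_imset => B; rewrite /= imset_comp.
Qed.

Section Partitions.
Variables X Y : finType.

Lemma pushforwardK (f : X -> Y) (g : Y -> X) : cancel f g ->
  cancel (pushforward f) (pushforward g).
Proof.
move=> fK P; rewrite -pushforward_comp -[RHS]imset_id.
by apply: eq_imset => B; rewrite /= (eq_imset _ fK) imset_id.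
Qed.

Lemma partition_pushforward (f : X -> Y) (g : Y -> X) (P : {set {set X}}) :
  cancel f g -> cancel g f -> is_partition P -> is_partition (pushforward f P).
Proof.
move=> fK gK; rewrite /is_partition -(imset_partition _ _ (can_inj fK)).
by rewrite (can2_imset_pre _ fK gK) preimsetT.
Qed.

Lemma pullback_can (f : X -> Y) (g : Y -> X) (Q : {set {set Y}}) :
  cancel f g -> cancel g f -> is_partition Q -> pullback f Q = pushforward g Q.
Proof.
move=> fK gK /and3P[_ _ Q0].
have preE B : f @^-1: B = g @: B.
  by apply/setP=> x; rewrite inE; apply/idP/imsetP=> [|[y yB ->]];
    [exists (f x); rewrite ?fK | rewrite gK].
apply/setP=> A; apply/imsetP/imsetP=> -[B].
  by rewrite inE => /andP[BQ _] ->; exists B; rewrite ?preE.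
move=> BQ ->; exists B; last by rewrite preE.
rewrite inE BQ preE imset_eq0.
by apply: contraNneq Q0 => <-.
Qed.

Lemma refines_pushforward (f : X -> Y) (P Q : {set {set X}}) :
  refines P Q -> refines (pushforward f P) (pushforward f Q).
Proof.
move=> PQ _ /imsetP[B BP ->]; have [C CQ BC] := PQ B BP.
by exists (f @: C); [exact: imset_f | exact: imsetS].
Qed.

Lemma refines_refl (P : {set {set X}}) : refines P P.
Proof. by move=> B BP; exists B. Qed.

Lemma refines_subset (P Q : {set {set X}}) :
  is_partition P -> refines P Q -> refines Q P -> P \subset Q.
Proof.
move=> /and3P[_ triP P0] PQ QP; apply/subsetP=> B BP.
have [C CQ BC] := PQ B BP; have [B' B'P CB'] := QP C CQ.
have /set0Pn[x xB] : B != set0 by apply: contraNneq P0 => <-.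
have xB' : x \in B' by apply: subsetP CB' x (subsetP BC x xB).
have BB' : B' = B.
  by rewrite -(def_pblock triP BP xB) (def_pblock triP B'P xB').
suff -> : B = C by [].
by apply/eqP; rewrite eqEsubset BC -BB'.
Qed.

Lemma refines_anti (P Q : {set {set X}}) :
  is_partition P -> is_partition Q -> refines P Q -> refines Q P -> P = Q.
Proof.
move=> partP partQ PQ QP; apply/eqP.
by rewrite eqEsubset !refines_subset.
Qed.

End Partitions.

(* The pullback along a bijection is the pushforward along its inverse, so
   the two refinement hypotheses become mutual refinement on X. *)
Lemma refines_pullback_can (X Y : finType) (f : X -> Y) (g : Y -> X)
    (P : {set {set X}}) (Q : {set {set Y}}) :
  cancel f g -> cancel g f -> is_partition P -> is_partition Q ->
  refines P (pullback f Q) -> refines Q (pullback g P) ->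
  Q = pushforward f P.
Proof.
move=> fK gK partP partQ.
rewrite (pullback_can fK gK partQ) (pullback_can gK fK partP) => PQ QP.
have partgQ := partition_pushforward gK fK partQ.
have gQP : refines (pushforward g Q) P.
  by rewrite -(pushforwardK fK P); apply: refines_pushforward.
by rewrite (refines_anti partP partgQ PQ gQP) (pushforwardK gK).
Qed.

Section Isometries.
Variable R : realType.

Lemma isometry_inv (M N : finMetric R) (f : M -> N) : Defs.isometry f ->
  exists g : N -> M, [/\ Defs.isometry g, cancel f g & cancel g f].
Proof.
case=> [[g fK gK] f_iso]; exists g; split=> //; split; first by exists f.
by move=> y y'; rewrite -f_iso !gK.
Qed.

Lemma isometry_comp (A B C : finMetric R) (f : A -> B) (g : B -> C) :
  Defs.isometry f -> Defs.isometry g -> Defs.isometry (g \o f).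
Proof.
move=> [f_bij f_iso] [g_bij g_iso]; split; first exact: bij_comp.
by move=> x x' /=; rewrite g_iso f_iso.
Qed.

Lemma cf_isometry (C : clustering_functor R) (M N : finMetric R) (f : M -> N) :
  Defs.isometry f -> C N = pushforward f (C M).
Proof.
move=> f_iso; have [g [g_iso fK gK]] := isometry_inv f_iso.
apply: refines_pullback_can fK gK _ _ _ _; try exact: cf_partition.
  exact: cf_functorial.
exact: cf_functorial.
Qed.

Lemma cf_Xi (C : clustering_functor R) (M : finMetric R) : Xi (C M).
Proof.
split; first exact: cf_partition.
by move=> g g_iso; rewrite [RHS](cf_isometry C g_iso).
Qed.

(* [g2^-1 \o f \o g1] is an isometry of [A], hence fixes [P]. *)
Lemma Xi_pushforward (A M N : finMetric R) (P : {set {set A}})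
    (g1 : A -> M) (g2 : A -> N) (f : M -> N) :
  Xi P -> Defs.isometry g1 -> Defs.isometry g2 -> Defs.isometry f ->
  pushforward g2 P = pushforward f (pushforward g1 P).
Proof.
move=> [_ P_fixed] g1_iso g2_iso f_iso.
have [h [h_iso _ hK]] := isometry_inv g2_iso.
have hfg1_iso : Defs.isometry (h \o (f \o g1)).
  by apply: isometry_comp => //; exact: isometry_comp.
rewrite -{1}(P_fixed _ hfg1_iso) /act_partition -/(pushforward _ P).
rewrite -pushforward_comp -pushforward_comp.
by apply: eq_imset => B /=; apply: eq_imset => x /=; rewrite hK.
Qed.

End Isometries.

Section Extension.
Variables (R : realType) (I : Type) (rep : I -> finMetric R).
Hypothesis rep_surj : forall M : finMetric R, exists z : I, isometric M (rep z).
Hypothesis rep_inj : forall z z' : I, isometric (rep z) (rep z') -> z = z'.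
Variable p : forall z : I, {set {set rep z}}.
Hypothesis p_Xi : forall z, Xi (p z).

Lemma rep_isometric_to (M : finMetric R) :
  exists z, exists g : rep z -> M, Defs.isometry g.
Proof.
have [z [f f_iso]] := rep_surj M; have [g [g_iso _ _]] := isometry_inv f_iso.
by exists z, g.
Qed.

Lemma rep_unique (M : finMetric R) (z z' : I)
    (g : rep z -> M) (g' : rep z' -> M) :
  Defs.isometry g -> Defs.isometry g' -> z = z'.
Proof.
move=> g_iso g'_iso; have [h [h_iso _ _]] := isometry_inv g'_iso.
by apply: rep_inj; exists (h \o g); exact: isometry_comp.
Qed.

Definition rep_chart (M : finMetric R) :
  {z : I & {g : rep z -> M | Defs.isometry g}} :=
  let (z, ex) := constructive_indefinite_description _ (rep_isometric_to M) in
  existT _ z (constructive_indefinite_description _ ex).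

Definition extend_cf (M : finMetric R) : {set {set M}} :=
  let: existT z (exist g _) := rep_chart M in pushforward g (p z).

Lemma extend_cf_partition (M : finMetric R) : is_partition (extend_cf M).
Proof.
rewrite /extend_cf; case: (rep_chart M) => z [g g_iso].
have [h [_ gK hK]] := isometry_inv g_iso.
exact: partition_pushforward gK hK (proj1 (p_Xi z)).
Qed.

Lemma extend_cf_functorial (M N : finMetric R) (f : M -> N) :
  Defs.isometry f -> refines (extend_cf M) (pullback f (extend_cf N)).
Proof.
move=> f_iso; have [h [_ fK hK]] := isometry_inv f_iso.
rewrite (pullback_can fK hK (extend_cf_partition N)).
rewrite /extend_cf; case: (rep_chart M) => z [g g_iso].
case: (rep_chart N) => z' [g' g'_iso].
have fg_iso : Defs.isometry (f \o g) by exact: isometry_comp.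
have ez := rep_unique fg_iso g'_iso; subst z'.
rewrite (Xi_pushforward (p_Xi z) g_iso g'_iso f_iso) pushforwardK //.
exact: refines_refl.
Qed.

Definition extension : clustering_functor R :=
  ClusteringFunctor extend_cf_partition extend_cf_functorial.

Lemma extension_rep (z : I) : extension (rep z) = p z.
Proof.
rewrite /= /extend_cf; case: (rep_chart (rep z)) => z' [g g_iso].
have id_iso : Defs.isometry (@id (rep z)) by split=> //; exists id.
have ez := rep_unique g_iso id_iso; subst z'.
exact: (proj2 (p_Xi z) g g_iso).
Qed.

End Extension.

Theorem mainTheorem2 (R : realType) (I : Type) (rep : I -> finMetric R)
  (rep_surj : forall M : finMetric R, exists z : I, isometric M (rep z))
  (rep_inj : forall z z' : I, isometric (rep z) (rep z') -> z = z') :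
  (forall (C : clustering_functor R) (z : I), Xi (C (rep z)))
  /\ (forall p : forall z : I, {set {set carrier (rep z)}},
        (forall z, Xi (p z)) ->
        exists C : clustering_functor R, forall z, C (rep z) = p z)
  /\ (forall C C' : clustering_functor R,
        (forall z, C (rep z) = C' (rep z)) -> forall M : finMetric R, C M = C' M).
Proof.
split; [|split].
- by move=> C z; exact: cf_Xi.
- move=> p p_Xi; exists (extension rep_surj rep_inj p_Xi).
  exact: extension_rep.
- move=> C C' eqCC' M.
  have [z [g g_iso]] := rep_isometric_to rep_surj M.
  by rewrite (cf_isometry C g_iso) (cf_isometry C' g_iso) eqCC'.
Qed.
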